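(* Let $n\geq 2$ and let $G$ be a group of type $MC(n)$. Then for every homomorphism $\psi$ from $G$ to the group of orientation-preserving $C^2$ diffeomorphisms of a compact interval $I$, the image $\psi(G)$ is abelian.
   Context: A group $G$ is of type $MC(n)$ if it is nonabelian and has a generating set $\{a_i,b_i\}_{i=1}^n\cup\{c_j\}_{j=1}^{n-1}$ satisfying: (1) $a_ia_j=a_ja_i$, $b_ib_j=b_jb_i$, $c_ic_j=c_jc_i$, $a_ic_j=c_ja_i$ for all $i,j$; (2) $a_ib_j=b_ja_i$ if $i\neq j$; (3) $b_ic_j=c_jb_i$ if $j\neq i,i-1$; (4) $a_ib_ia_i=b_ia_ib_i$ for $1\le i\le n$, and $b_ic_jb_i=c_jb_ic_j$ whenever $j=i$ or $j=i-1$. *)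

From Stdlib Require Import Reals.
From Coquelicot Require Import Coquelicot.
Open Scope R_scope.

Definition is_group {G : Type} (mul : G -> G -> G) (inv : G -> G) (e : G) : Prop :=
  (forall x y z, mul x (mul y z) = mul (mul x y) z) /\
  (forall x, mul e x = x) /\ (forall x, mul x e = x) /\
  (forall x, mul (inv x) x = e) /\ (forall x, mul x (inv x) = e).

Inductive in_gen {G : Type} (mul : G -> G -> G) (inv : G -> G) (e : G)
  (S : G -> Prop) : G -> Prop :=
| gen_base : forall x, S x -> in_gen mul inv e S x
| gen_one : in_gen mul inv e S e
| gen_mul : forall x y, in_gen mul inv e S x -> in_gen mul inv e S y ->
    in_gen mul inv e S (mul x y)
| gen_inv : forall x, in_gen mul inv e S x -> in_gen mul inv e S (inv x).

Definition MC {G : Type} (mul : G -> G -> G) (inv : G -> G) (e : G) (n : nat) : Prop :=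
  (exists x y : G, mul x y <> mul y x) /\
  exists a b c : nat -> G,
    (forall g, in_gen mul inv e
       (fun x => (exists i, (1 <= i <= n)%nat /\ (x = a i \/ x = b i)) \/
                 (exists j, (1 <= j <= n - 1)%nat /\ x = c j)) g) /\
    (forall i j, (1 <= i <= n)%nat -> (1 <= j <= n)%nat ->
       mul (a i) (a j) = mul (a j) (a i) /\ mul (b i) (b j) = mul (b j) (b i)) /\
    (forall i j, (1 <= i <= n - 1)%nat -> (1 <= j <= n - 1)%nat ->
       mul (c i) (c j) = mul (c j) (c i)) /\
    (forall i j, (1 <= i <= n)%nat -> (1 <= j <= n - 1)%nat ->
       mul (a i) (c j) = mul (c j) (a i)) /\
    (forall i j, (1 <= i <= n)%nat -> (1 <= j <= n)%nat -> i <> j ->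
       mul (a i) (b j) = mul (b j) (a i)) /\
    (forall i j, (1 <= i <= n)%nat -> (1 <= j <= n - 1)%nat ->
       j <> i -> j <> (i - 1)%nat ->
       mul (b i) (c j) = mul (c j) (b i)) /\
    (forall i, (1 <= i <= n)%nat ->
       mul (a i) (mul (b i) (a i)) = mul (b i) (mul (a i) (b i))) /\
    (forall i j, (1 <= i <= n)%nat -> (1 <= j <= n - 1)%nat ->
       (j = i \/ j = (i - 1)%nat) ->
       mul (b i) (mul (c j) (b i)) = mul (c j) (mul (b i) (c j))).

Definition C2 (f : R -> R) : Prop :=
  forall x, ex_derive f x /\ ex_derive (Derive f) x /\
            continuous (Derive (Derive f)) x.

Definition in_I (p q x : R) : Prop := p <= x <= q.

(* f is C^2 on [p,q]: restriction of a C^2 function on R (equivalently,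
   C^2 with one-sided derivatives at the endpoints) *)
Definition C2_on (p q : R) (f : R -> R) : Prop :=
  exists g : R -> R, C2 g /\ forall x, in_I p q x -> g x = f x.

Definition Diff2_plus (p q : R) (f : R -> R) : Prop :=
  C2_on p q f /\
  (forall x, in_I p q x -> in_I p q (f x)) /\
  (exists g : R -> R, C2_on p q g /\
     (forall x, in_I p q x -> in_I p q (g x)) /\
     (forall x, in_I p q x -> g (f x) = x) /\
     (forall x, in_I p q x -> f (g x) = x)) /\
  (forall x y, in_I p q x -> in_I p q y -> x < y -> f x < f y).

(* psi is a homomorphism G -> Diff^2_+([p,q]) (elements of the target are
   functions considered up to equality on [p,q]; the group law is composition) *)
Definition hom_to_Diff2 {G : Type} (mul : G -> G -> G) (p q : R)
  (psi : G -> R -> R) : Prop :=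
  (forall g, Diff2_plus p q (psi g)) /\
  (forall g h x, in_I p q x -> psi (mul g h) x = psi g (psi h x)).

From Stdlib Require Import Reals Lra Lia Classical.
From Coquelicot Require Import Coquelicot.
Open Scope R_scope.

(* Kopell's lemma drives everything.  If [f] and [g] are commuting C^2
   diffeomorphisms of [p, q], [f] fixes [c] and [g] has no fixed point between
   [c] and [t], then [f] fixes [t].  Otherwise, in a fundamental domain of [g]
   near its attracting fixed point [L], the [f]-orbit of a point moved by [f]
   has arbitrarily short steps; conjugating deep towards [L], where every power
   of [f] has derivative close to 1 because it fixes the [g]-orbit of [c], such
   a short step is at least half as long as the first one, which contradicts the
   bounded distortion of the powers of [g] on the fundamental domain.

   Consequently, if [f] commutes with [g] and [h] and [g h g = h g h], then [g]
   and [h] agree off the fixed points of [f].  Playing this against Kopell's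
   lemma along the A_4 chains [a_i - b_i - c_(i-1) - b_(i-1)] (and
   [a_1 - b_1 - c_1 - b_2]) shows that [a_i] and [b_i] act in the same way; then
   [c_j] commutes and braids with [b_j] and [b_(j+1)], hence acts like both.  So
   every generator acts like [b_1], and the image is abelian. *)

Ltac bounds := unfold in_I, Rmin, Rmax in *; repeat destruct (Rle_dec _ _); lra.

Lemma continuity_of_ex_derive (f : R -> R) : (forall x, ex_derive f x) -> continuity f.
Proof.
  intros Hf x. apply continuity_pt_filterlim.
  apply (@ex_derive_continuous R_AbsRing R_NormedModule), Hf.
Qed.

Lemma C2_ex_derive (E : R -> R) : C2 E -> forall x, ex_derive E x.
Proof. intros HE x. apply (HE x). Qed.

Lemma C2_ex_derive_Derive (E : R -> R) : C2 E -> forall x, ex_derive (Derive E) x.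
Proof. intros HE x. apply (HE x). Qed.

Lemma C2_continuity (E : R -> R) : C2 E -> continuity E.
Proof. intros HE. apply continuity_of_ex_derive, C2_ex_derive, HE. Qed.

Lemma C2_continuity_Derive (E : R -> R) : C2 E -> continuity (Derive E).
Proof. intros HE. apply continuity_of_ex_derive, C2_ex_derive_Derive, HE. Qed.

Lemma C2_continuity_Derive2 (E : R -> R) : C2 E -> continuity (Derive (Derive E)).
Proof. intros HE x. apply continuity_pt_filterlim, (HE x). Qed.

Lemma exp_le_exp_of_le x y : x <= y -> exp x <= exp y.
Proof. intros [Hxy | ->]; [left; apply exp_increasing, Hxy | right; reflexivity]. Qed.

Lemma MVT_Derive (f : R -> R) a b : (forall x, ex_derive f x) -> a < b ->
  exists z, a < z < b /\ f b - f a = Derive f z * (b - a).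
Proof.
  intros Hf Hab.
  destruct (MVT_cor2 f (Derive f) a b Hab) as [z [Hz Hzab]].
  - intros x _. apply is_derive_Reals, Derive_correct, Hf.
  - exists z. split; assumption.
Qed.

Lemma continuity_pt_ball (f : R -> R) x : continuity_pt f x -> forall eps, 0 < eps ->
  exists alp, 0 < alp /\ forall y, Rabs (y - x) < alp -> Rabs (f y - f x) < eps.
Proof.
  intros Hf eps Heps. destruct (Hf eps Heps) as [alp [Halp Hball]].
  exists alp. split; [exact Halp|]. intros y Hy.
  destruct (Req_dec y x) as [-> | Hyx].
  - rewrite Rminus_diag, Rabs_R0. exact Heps.
  - apply (Hball y). split; [split; [exact I | auto] | exact Hy].
Qed.

Lemma bounded_on_segment (f : R -> R) p q : p <= q -> continuity f ->
  exists M, 0 <= M /\ forall x, p <= x <= q -> Rabs (f x) <= M.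
Proof.
  intros Hpq Hf.
  destruct (continuity_ab_maj (fun x => Rabs (f x)) p q Hpq) as [xM [HM _]].
  - intros x _. apply (continuity_pt_comp f Rabs); [apply Hf | apply Rcontinuity_abs].
  - exists (Rabs (f xM)). split; [apply Rabs_pos | exact HM].
Qed.

Lemma lower_bound_of_dense (f : R -> R) p q m : p < q -> continuity f ->
  (forall y z, p <= y -> y < z -> z <= q -> exists w, y < w < z /\ m < f w) ->
  forall x, p <= x <= q -> m <= f x.
Proof.
  intros Hpq Hf Hdense x Hx. apply Rnot_lt_le. intros Hfx.
  destruct (continuity_pt_ball f x (Hf x) (m - f x)) as [alp [Halp Hball]]; [lra|].
  assert (Hw : exists w, Rabs (w - x) < alp /\ m < f w).
  { destruct (Rlt_le_dec x q) as [Hxq | Hxq].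
    - destruct (Hdense x (Rmin (x + alp / 2) q)) as [w [Hw Hmw]].
      + lra.
      + apply Rmin_glb_lt; lra.
      + apply Rmin_r.
      + exists w. split; [|exact Hmw].
        pose proof (Rmin_l (x + alp / 2) q). apply Rabs_lt_between'. lra.
    - destruct (Hdense (Rmax (x - alp / 2) p) x) as [w [Hw Hmw]].
      + apply Rmax_r.
      + apply Rmax_lub_lt; lra.
      + lra.
      + exists w. split; [|exact Hmw].
        pose proof (Rmax_l (x - alp / 2) p). apply Rabs_lt_between'. lra. }
  destruct Hw as [w [Hwx Hmw]].
  specialize (Hball w Hwx). apply Rabs_lt_between' in Hball. lra.
Qed.

Lemma Rabs_diff_le_of_Derive_bound (f : R -> R) p q M : (forall x, ex_derive f x) ->
  (forall x, p <= x <= q -> Rabs (Derive f x) <= M) ->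
  forall a b, p <= a <= q -> p <= b <= q -> Rabs (f a - f b) <= M * Rabs (a - b).
Proof.
  intros Hf HM.
  assert (Hlt : forall a b, p <= a -> a < b -> b <= q -> Rabs (f b - f a) <= M * (b - a)).
  { intros a b Ha Hab Hb. destruct (MVT_Derive f a b Hf Hab) as [z [Hz ->]].
    rewrite Rabs_mult, (Rabs_pos_eq (b - a)) by lra.
    apply Rmult_le_compat_r; [lra|]. apply HM. lra. }
  intros a b Ha Hb. destruct (Rtotal_order a b) as [Hab | [-> | Hab]].
  - rewrite (Rabs_minus_sym (f a)), (Rabs_minus_sym a), (Rabs_pos_eq (b - a)) by lra.
    apply Hlt; lra.
  - rewrite !Rminus_diag, Rabs_R0, Rmult_0_r. lra.
  - rewrite (Rabs_pos_eq (a - b)) by lra. apply Hlt; lra.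
Qed.

Lemma le_mul_exp_of_Derive_bound (f : R -> R) p q d M : (forall x, ex_derive f x) -> 0 < d ->
  (forall x, p <= x <= q -> d <= f x) -> (forall x, p <= x <= q -> Rabs (Derive f x) <= M) ->
  forall a b, p <= a <= q -> p <= b <= q -> f a <= f b * exp (M / d * Rabs (a - b)).
Proof.
  intros Hf Hd Hfd HM a b Ha Hb.
  pose proof (Rabs_diff_le_of_Derive_bound f p q M Hf HM a b Ha Hb) as Hlip.
  pose proof (Rle_abs (f a - f b)). pose proof (Hfd b Hb). pose proof (Rabs_pos (a - b)).
  assert (HM0 : 0 <= M) by (eapply Rle_trans; [apply Rabs_pos | apply (HM a Ha)]).
  set (X := M / d * Rabs (a - b)).
  assert (HX : M * Rabs (a - b) <= f b * X).
  { unfold X. replace (M * Rabs (a - b)) with (d * (M / d * Rabs (a - b))) by (field; lra).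
    apply Rmult_le_compat_r; [|assumption].
    apply Rmult_le_pos; [apply Rdiv_le_0_compat|]; lra. }
  assert (f b * (1 + X) <= f b * exp X) by (apply Rmult_le_compat_l; [lra | apply exp_ineq1_le]).
  lra.
Qed.

Lemma distortion_step (E : R -> R) p q d M lo hi : C2 E -> 0 < d ->
  (forall x, p <= x <= q -> d <= Derive E x) ->
  (forall x, p <= x <= q -> Rabs (Derive (Derive E) x) <= M) -> p <= lo -> hi <= q ->
  forall a1 a2 b1 b2, lo <= a1 -> a1 < a2 -> a2 <= hi -> lo <= b1 -> b1 < b2 -> b2 <= hi ->
  (E a2 - E a1) * (b2 - b1) <= exp (M / d * (hi - lo)) * (a2 - a1) * (E b2 - E b1).
Proof.
  intros HE Hd HEd HM Hlo Hhi a1 a2 b1 b2 Ha1 Ha12 Ha2 Hb1 Hb12 Hb2.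
  destruct (MVT_Derive E a1 a2 (C2_ex_derive E HE) Ha12) as [w1 [Hw1 ->]].
  destruct (MVT_Derive E b1 b2 (C2_ex_derive E HE) Hb12) as [w2 [Hw2 ->]].
  assert (Hratio : Derive E w1 <= Derive E w2 * exp (M / d * (hi - lo))).
  { eapply Rle_trans.
    - apply (le_mul_exp_of_Derive_bound _ p q d M (C2_ex_derive_Derive E HE) Hd HEd HM w1 w2); lra.
    - apply Rmult_le_compat_l; [pose proof (HEd w2); lra|].
      apply exp_le_exp_of_le, Rmult_le_compat_l.
      + apply Rdiv_le_0_compat; [eapply Rle_trans; [apply Rabs_pos | apply (HM w1); lra] | lra].
      + apply Rabs_le. lra. }
  pose proof (HEd w1 ltac:(lra)).
  assert (0 <= (a2 - a1) * (b2 - b1)) by (apply Rmult_le_pos; lra).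
  replace (exp (M / d * (hi - lo)) * (a2 - a1) * (Derive E w2 * (b2 - b1)))
    with (Derive E w2 * exp (M / d * (hi - lo)) * ((a2 - a1) * (b2 - b1))) by ring.
  replace (Derive E w1 * (a2 - a1) * (b2 - b1))
    with (Derive E w1 * ((a2 - a1) * (b2 - b1))) by ring.
  apply Rmult_le_compat_r; assumption.
Qed.

Lemma bounded_sequence_small_step (u : nat -> R) b eta : 0 < eta -> (forall m, u m <= b) ->
  exists m, u (S m) - u m < eta.
Proof.
  intros Heta Hb. apply NNPP. intros Hnone.
  assert (Hgrow : forall m, u 0%nat + INR m * eta <= u m).
  { induction m as [|m IH]; [simpl; lra|]. rewrite S_INR.
    assert (eta <= u (S m) - u m) by (apply Rnot_lt_le; intros H; apply Hnone; exists m; exact H).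
    lra. }
  destruct (INR_unbounded ((b - u 0%nat) / eta)) as [N HN].
  specialize (Hgrow N). specialize (Hb N).
  apply Rmult_gt_compat_r with (r := eta) in HN; [|lra].
  unfold Rdiv in HN. rewrite Rmult_assoc, Rinv_l, Rmult_1_r in HN by lra. lra.
Qed.

Section Action.

Variables (G : Type) (mul : G -> G -> G) (inv : G -> G) (e : G).
Hypothesis HG : is_group mul inv e.
Variables (p q : R) (psi : G -> R -> R).
Hypothesis Hpq : p < q.
Hypothesis Hpsi : hom_to_Diff2 mul p q psi.

Notation I := (in_I p q).

Lemma psi_mul g h x : I x -> psi (mul g h) x = psi g (psi h x).
Proof. apply Hpsi. Qed.

Lemma psi_in_I g x : I x -> I (psi g x).
Proof. apply (proj1 Hpsi g). Qed.

Lemma psi_lt g x y : I x -> I y -> x < y -> psi g x < psi g y.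
Proof. apply (proj1 Hpsi g). Qed.

Lemma psi_le g x y : I x -> I y -> x <= y -> psi g x <= psi g y.
Proof.
  intros Hx Hy [Hxy | ->]; [left; apply psi_lt | right]; auto.
Qed.

Lemma psi_inj g x y : I x -> I y -> psi g x = psi g y -> x = y.
Proof.
  intros Hx Hy Hg. destruct (Rtotal_order x y) as [Hxy | [Hxy | Hxy]]; auto.
  - pose proof (psi_lt g x y Hx Hy Hxy). lra.
  - pose proof (psi_lt g y x Hy Hx Hxy). lra.
Qed.

Lemma psi_e x : I x -> psi e x = x.
Proof.
  intros Hx. destruct HG as [_ [He _]].
  apply (psi_inj e); [apply psi_in_I | |]; auto.
  rewrite <- psi_mul, He; auto.
Qed.

Lemma psi_inv_l g x : I x -> psi (inv g) (psi g x) = x.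
Proof.
  intros Hx. destruct HG as [_ [_ [_ [Hinv _]]]]. rewrite <- psi_mul, Hinv; auto. apply psi_e, Hx.
Qed.

Lemma psi_inv_r g x : I x -> psi g (psi (inv g) x) = x.
Proof.
  intros Hx. destruct HG as [_ [_ [_ [_ Hinv]]]]. rewrite <- psi_mul, Hinv; auto. apply psi_e, Hx.
Qed.

Lemma psi_C2_ext g : exists E, C2 E /\ forall x, I x -> E x = psi g x.
Proof. apply (proj1 Hpsi g). Qed.

Lemma psi_ivt g (F : R -> R) a b : continuity F -> I a -> I b -> a <= b ->
  (psi g a - F a) * (psi g b - F b) <= 0 -> exists z, a <= z <= b /\ psi g z = F z.
Proof.
  intros HF Ha Hb Hab Hsign. destruct (psi_C2_ext g) as [E [HE HEg]].
  destruct (IVT_cor (fun x => E x - F x) a b) as [z [Hz HFz]].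
  - apply continuity_minus; [apply C2_continuity |]; assumption.
  - exact Hab.
  - rewrite !HEg; assumption.
  - exists z. split; [exact Hz|]. rewrite <- HEg by bounds. lra.
Qed.

Lemma psi_ivt_fixed g a b : I a -> I b -> a <= b -> (psi g a - a) * (psi g b - b) <= 0 ->
  exists z, a <= z <= b /\ psi g z = z.
Proof. apply (psi_ivt g id), derivable_continuous, derivable_id. Qed.

Fixpoint gpow (g : G) (n : nat) : G :=
  match n with O => e | S n => mul g (gpow g n) end.

Lemma psi_gpow_0 g x : I x -> psi (gpow g 0) x = x.
Proof. apply psi_e. Qed.

Lemma psi_gpow_S g n x : I x -> psi (gpow g (S n)) x = psi g (psi (gpow g n) x).
Proof. apply psi_mul. Qed.

Lemma psi_gpow_S' g n x : I x -> psi (gpow g (S n)) x = psi (gpow g n) (psi g x).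
Proof.
  revert x. induction n as [|n IH]; intros x Hx.
  - rewrite psi_gpow_S, !psi_gpow_0; auto. apply psi_in_I, Hx.
  - rewrite psi_gpow_S, IH, <- psi_gpow_S; auto. apply psi_in_I, Hx.
Qed.

Lemma psi_gpow_fixed g n x : I x -> psi g x = x -> psi (gpow g n) x = x.
Proof.
  intros Hx Hgx. induction n as [|n IH]; [apply psi_gpow_0, Hx|].
  rewrite psi_gpow_S, IH; assumption.
Qed.

Definition commute_on f g := forall x, I x -> psi f (psi g x) = psi g (psi f x).

Definition braid_on f g := forall x, I x -> psi f (psi g (psi f x)) = psi g (psi f (psi g x)).

Lemma commute_on_sym f g : commute_on f g -> commute_on g f.
Proof. intros Hfg x Hx. symmetry. apply Hfg, Hx. Qed.

Lemma braid_on_sym f g : braid_on f g -> braid_on g f.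
Proof. intros Hfg x Hx. symmetry. apply Hfg, Hx. Qed.

Lemma commute_on_of_mul f g : mul f g = mul g f -> commute_on f g.
Proof. intros Hfg x Hx. rewrite <- !psi_mul, Hfg; auto. Qed.

Lemma braid_on_of_mul f g : mul f (mul g f) = mul g (mul f g) -> braid_on f g.
Proof.
  intros Hfg x Hx.
  rewrite <- (psi_mul g f), <- (psi_mul f (mul g f)), <- (psi_mul f g), <- (psi_mul g (mul f g)),
    Hfg; auto using psi_in_I.
Qed.

Lemma commute_on_inv f g : commute_on f g -> commute_on (inv f) g.
Proof.
  intros Hfg x Hx. apply (psi_inj f); auto using psi_in_I.
  rewrite psi_inv_r, Hfg, psi_inv_r; auto using psi_in_I.
Qed.

Lemma commute_on_gpow f g n : commute_on f g -> commute_on f (gpow g n).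
Proof.
  intros Hfg. induction n as [|n IH]; intros x Hx.
  - rewrite !psi_gpow_0; auto using psi_in_I.
  - rewrite !psi_gpow_S, Hfg, IH; auto using psi_in_I.
Qed.

Lemma commute_on_congr f g h : (forall x, I x -> psi g x = psi h x) ->
  commute_on f g -> commute_on f h.
Proof.
  intros Hgh Hfg x Hx. rewrite <- !Hgh; auto using psi_in_I.
Qed.

Lemma psi_inv_fixed g x : I x -> psi g x = x -> psi (inv g) x = x.
Proof. intros Hx Hgx. rewrite <- Hgx at 1. apply psi_inv_l, Hx. Qed.

Lemma psi_inv_lt g x : I x -> x < psi g x -> psi (inv g) x < x.
Proof.
  intros Hx Hgx. rewrite <- (psi_inv_l g x Hx) at 2. apply psi_lt; auto using psi_in_I.
Qed.

Lemma Derive_ext_lower_bound g E : C2 E -> (forall x, I x -> E x = psi g x) ->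
  exists d, 0 < d /\ forall x, I x -> d <= Derive E x.
Proof.
  intros HE HEg. destruct (psi_C2_ext (inv g)) as [H [HH HHg]].
  destruct (bounded_on_segment (Derive H) p q) as [M [HM0 HM]];
    [lra | apply C2_continuity_Derive, HH |].
  exists (/ (M + 1)). split; [apply Rinv_0_lt_compat; lra|].
  apply (lower_bound_of_dense _ p q); [lra | apply C2_continuity_Derive, HE |].
  intros y z Hy Hyz Hz.
  assert (Iy : I y) by bounds. assert (Iz : I z) by bounds.
  pose proof (psi_lt g y z Iy Iz Hyz) as Hgyz.
  destruct (MVT_Derive E y z (C2_ex_derive E HE) Hyz) as [w [Hw HEw]].
  destruct (MVT_Derive H _ _ (C2_ex_derive H HH) Hgyz) as [w' [Hw' HHw']].
  rewrite !HEg in HEw by assumption.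
  rewrite !HHg, !psi_inv_l in HHw' by auto using psi_in_I.
  assert (Iw' : I w') by (pose proof (psi_in_I g y Iy); pose proof (psi_in_I g z Iz); bounds).
  pose proof (HM w' Iw'). pose proof (Rle_abs (Derive H w')).
  assert (HEw0 : 0 < Derive E w) by nra.
  (* the inverse is M-Lipschitz, so the slope of [g] on [y, z] is at least [1 / M] *)
  assert (1 <= M * Derive E w) by nra.
  exists w. split; [exact Hw|].
  apply (Rmult_lt_reg_r (M + 1)); [lra|]. rewrite Rinv_l by lra. nra.
Qed.

Lemma psi_cross g h a b : I a -> I b -> psi g a < psi h a -> psi h b < psi g b ->
  exists z, Rmin a b <= z <= Rmax a b /\ psi g z = psi h z.
Proof.
  intros Ia Ib Ha Hb. destruct (psi_C2_ext h) as [E [HE HEh]].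
  assert (HEc : continuity E) by (apply C2_continuity, HE).
  destruct (Rle_dec a b) as [Hab | Hab].
  - destruct (psi_ivt g E a b) as [z [Hz Hgz]]; auto; [rewrite !HEh by assumption; nra|].
    exists z. split; [bounds | rewrite Hgz; apply HEh; bounds].
  - destruct (psi_ivt g E b a) as [z [Hz Hgz]]; auto; [lra | rewrite !HEh by assumption; nra|].
    exists z. split; [bounds | rewrite Hgz; apply HEh; bounds].
Qed.

Lemma psi_gpow_step_lt g n y : I y -> psi g y < y -> psi (gpow g (S n)) y < psi (gpow g n) y.
Proof. intros Hy Hgy. rewrite psi_gpow_S' by exact Hy. apply psi_lt; auto using psi_in_I. Qed.

Lemma psi_gpow_step_gt g n y : I y -> y < psi g y -> psi (gpow g n) y < psi (gpow g (S n)) y.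
Proof. intros Hy Hgy. rewrite psi_gpow_S' by exact Hy. apply psi_lt; auto using psi_in_I. Qed.

Lemma psi_gpow_ge g n y : I y -> y < psi g y -> y <= psi (gpow g n) y.
Proof.
  intros Hy Hgy. induction n as [|n IH]; [rewrite psi_gpow_0 by exact Hy; lra|].
  pose proof (psi_gpow_step_gt g n y Hy Hgy). lra.
Qed.

Lemma orbit_limit_fixed g y : I y -> psi g y < y ->
  exists L, I L /\ L < y /\ psi g L = L /\ Un_cv (fun n => psi (gpow g n) y) L.
Proof.
  intros Hy Hgy. set (u := fun n => psi (gpow g n) y).
  assert (Iu : forall n, I (u n)) by (intros n; apply psi_in_I, Hy).
  assert (Hdec : Un_decreasing u) by (intros n; left; apply psi_gpow_step_lt; assumption).
  destruct (decreasing_cv u Hdec) as [L HL].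
  { exists (- p). intros x [n ->]. unfold opp_seq. specialize (Iu n). bounds. }
  pose proof (decreasing_ineq u L Hdec HL) as HLu.
  assert (IL : I L).
  { split.
    - apply Rnot_lt_le. intros HLp. destruct (HL (p - L)) as [N HN]; [lra|].
      specialize (HN N (le_n N)). unfold Rdist in HN. apply Rabs_lt_between' in HN.
      specialize (Iu N). bounds.
    - specialize (HLu 0%nat). specialize (Iu 0%nat). bounds. }
  destruct (psi_C2_ext g) as [E [HE HEg]].
  assert (HgL : psi g L = L).
  { rewrite <- HEg by exact IL. apply (UL_sequence (fun n => E (u n))).
    - apply continuity_seq; [apply C2_continuity, HE | exact HL].
    - intros eps Heps. destruct (HL eps Heps) as [N HN]. exists N. intros n Hn.
      unfold u. rewrite HEg, <- psi_gpow_S by (auto using psi_in_I). apply HN. lia. }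
  exists L. split; [exact IL|]. split; [|split; [exact HgL | exact HL]].
  pose proof (HLu 1%nat). pose proof (psi_gpow_step_lt g 0 y Hy Hgy). unfold u in *.
  rewrite psi_gpow_0 in * by exact Hy. lra.
Qed.

Lemma psi_lt_above_orbit_limit g y L : I y -> psi g y < y -> I L ->
  Un_cv (fun n => psi (gpow g n) y) L -> forall s, L < s <= y -> psi g s < s.
Proof.
  intros Hy Hgy IL HL s Hs. apply Rnot_le_lt. intros Hgs.
  assert (Is : I s) by bounds.
  destruct (psi_ivt_fixed g s y Is Hy) as [r [Hr Hgr]]; [lra | nra |].
  assert (Ir : I r) by bounds.
  assert (Hru : forall n, r <= psi (gpow g n) y).
  { intros n. rewrite <- (psi_gpow_fixed g n r Ir Hgr). apply psi_le; auto. lra. }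
  destruct (HL (r - L)) as [N HN]; [lra|]. specialize (HN N (le_n N)).
  unfold Rdist in HN. apply Rabs_lt_between' in HN. specialize (Hru N). lra.
Qed.

Section Contraction.

Variables (g : G) (L c : R).
Hypotheses (IL : I L) (Ic : I c) (HLc : L < c) (HgL : psi g L = L)
  (Hcontr : forall s, L < s <= c -> psi g s < s)
  (Hcv : Un_cv (fun n => psi (gpow g n) c) L).

Lemma orbit_gt_fixed n : L < psi (gpow g n) c.
Proof. rewrite <- (psi_gpow_fixed g n L IL HgL). apply psi_lt; auto. Qed.

Lemma distortion_orbit E d M : C2 E -> (forall x, I x -> E x = psi g x) -> 0 < d ->
  (forall x, I x -> d <= Derive E x) -> (forall x, I x -> Rabs (Derive (Derive E) x) <= M) ->
  forall n y1 y2 z1 z2, psi g c <= y1 -> y1 < y2 -> y2 <= c ->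
    psi g c <= z1 -> z1 < z2 -> z2 <= c ->
  (psi (gpow g n) z2 - psi (gpow g n) z1) * (y2 - y1) <=
  exp (M / d * (c - psi (gpow g n) c)) * (z2 - z1) * (psi (gpow g n) y2 - psi (gpow g n) y1).
Proof.
  intros HE HEg Hd HEd HM n y1 y2 z1 z2 Hy1 Hy12 Hy2 Hz1 Hz12 Hz2.
  assert (Igc : I (psi g c)) by (apply psi_in_I, Ic).
  assert (Iy1 : I y1) by bounds. assert (Iy2 : I y2) by bounds.
  assert (Iz1 : I z1) by bounds. assert (Iz2 : I z2) by bounds.
  induction n as [|n IH].
  { rewrite !psi_gpow_0 by assumption. rewrite Rminus_diag, Rmult_0_r, exp_0. lra. }
  assert (Hrange : forall z, psi g c <= z <= c ->
    psi (gpow g (S n)) c <= psi (gpow g n) z <= psi (gpow g n) c).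
  { intros z Hz. rewrite psi_gpow_S' by exact Ic. split; apply psi_le; auto; bounds. }
  pose proof (Hrange z1 ltac:(lra)). pose proof (Hrange z2 ltac:(lra)).
  pose proof (Hrange y1 ltac:(lra)). pose proof (Hrange y2 ltac:(lra)).
  assert (Ha : psi (gpow g n) z1 < psi (gpow g n) z2) by (apply psi_lt; assumption).
  assert (Hb : psi (gpow g n) y1 < psi (gpow g n) y2) by (apply psi_lt; assumption).
  assert (Hb' : psi (gpow g (S n)) y1 < psi (gpow g (S n)) y2) by (apply psi_lt; assumption).
  assert (Hstep := distortion_step E p q d M (psi (gpow g (S n)) c) (psi (gpow g n) c)
    HE Hd HEd HM ltac:(apply psi_in_I, Ic) ltac:(apply psi_in_I, Ic)
    (psi (gpow g n) z1) (psi (gpow g n) z2) (psi (gpow g n) y1) (psi (gpow g n) y2)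
    ltac:(lra) Ha ltac:(lra) ltac:(lra) Hb ltac:(lra)).
  rewrite !HEg, <- !psi_gpow_S in Hstep by (try apply psi_in_I; assumption).
  replace (c - psi (gpow g (S n)) c)
    with ((psi (gpow g n) c - psi (gpow g (S n)) c) + (c - psi (gpow g n) c)) by ring.
  rewrite Rmult_plus_distr_l, exp_plus.
  set (K := exp (M / d * (psi (gpow g n) c - psi (gpow g (S n)) c))) in *.
  set (X := exp (M / d * (c - psi (gpow g n) c))) in *.
  assert (HK : 0 < K) by apply exp_pos.
  apply (Rmult_le_reg_r (psi (gpow g n) y2 - psi (gpow g n) y1)); [lra|].
  pose proof (Rmult_le_compat_r (y2 - y1) _ _ ltac:(lra) Hstep).
  pose proof (Rmult_le_compat_l (K * (psi (gpow g (S n)) y2 - psi (gpow g (S n)) y1)) _ _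
    ltac:(apply Rmult_le_pos; lra) IH).
  lra.
Qed.

Lemma bounded_distortion : exists Q, 0 < Q /\
  forall n y1 y2 z1 z2, psi g c <= y1 -> y1 < y2 -> y2 <= c ->
    psi g c <= z1 -> z1 < z2 -> z2 <= c ->
  (psi (gpow g n) z2 - psi (gpow g n) z1) * (y2 - y1) <=
  Q * (z2 - z1) * (psi (gpow g n) y2 - psi (gpow g n) y1).
Proof.
  destruct (psi_C2_ext g) as [E [HE HEg]].
  destruct (Derive_ext_lower_bound g E HE HEg) as [d [Hd HEd]].
  destruct (bounded_on_segment (Derive (Derive E)) p q) as [M [HM0 HM]];
    [lra | apply C2_continuity_Derive2, HE |].
  exists (exp (M / d * (c - L))). split; [apply exp_pos|].
  intros n y1 y2 z1 z2 Hy1 Hy12 Hy2 Hz1 Hz12 Hz2.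
  eapply Rle_trans; [apply (distortion_orbit E d M); assumption|].
  assert (Igc : I (psi g c)) by (apply psi_in_I, Ic).
  assert (psi (gpow g n) y1 < psi (gpow g n) y2) by (apply psi_lt; auto; bounds).
  rewrite !Rmult_assoc. apply Rmult_le_compat_r; [apply Rmult_le_pos; lra|].
  apply exp_le_exp_of_le, Rmult_le_compat_l; [apply Rdiv_le_0_compat; lra|].
  pose proof (orbit_gt_fixed n). lra.
Qed.

Lemma Derive_near_limit k E : commute_on k g -> psi k c = c -> C2 E ->
  (forall x, I x -> E x = psi k x) ->
  exists alp, 0 < alp /\ forall w, Rabs (w - L) < alp -> 1 / 2 < Derive E w.
Proof.
  intros Hkg Hkc HE HEk.
  destruct (continuity_pt_ball (Derive E) L (C2_continuity_Derive E HE L) (1 / 4))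
    as [alp [Halp Hball]]; [lra|].
  exists alp. split; [exact Halp|].
  destruct (Hcv alp Halp) as [N HN]. specialize (HN N (le_n N)).
  unfold Rdist in HN. apply Rabs_lt_between' in HN.
  assert (HcS : psi (gpow g (S N)) c < psi (gpow g N) c)
    by (apply psi_gpow_step_lt; [exact Ic | apply Hcontr; lra]).
  assert (Hfix : forall n, psi k (psi (gpow g n) c) = psi (gpow g n) c)
    by (intros n; rewrite (commute_on_gpow k g n Hkg c Ic), Hkc; reflexivity).
  (* [k] fixes two consecutive points of the orbit, so [E] has slope 1 in between *)
  destruct (MVT_Derive E _ _ (C2_ex_derive E HE) HcS) as [z [Hz HEz]].
  rewrite !HEk, !Hfix in HEz by (apply psi_in_I, Ic).
  assert (HEz1 : Derive E z = 1)
    by (apply (Rmult_eq_reg_r (psi (gpow g N) c - psi (gpow g (S N)) c)); lra).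
  pose proof (orbit_gt_fixed (S N)).
  assert (HzL := Hball z ltac:(apply Rabs_lt_between'; lra)).
  intros w Hw. specialize (Hball w Hw). rewrite HEz1 in HzL.
  apply Rabs_lt_between' in HzL, Hball. lra.
Qed.

Lemma commuting_expands_near_limit k : commute_on k g -> psi k c = c ->
  exists N, forall y1 y2, psi g c <= y1 -> y1 < y2 -> y2 <= c ->
  psi (gpow g N) y2 - psi (gpow g N) y1 <
  2 * (psi (gpow g N) (psi k y2) - psi (gpow g N) (psi k y1)).
Proof.
  intros Hkg Hkc. destruct (psi_C2_ext k) as [E [HE HEk]].
  destruct (Derive_near_limit k E Hkg Hkc HE HEk) as [alp [Halp HDE]].
  destruct (Hcv alp Halp) as [N HN]. exists N. specialize (HN N (le_n N)).
  unfold Rdist in HN. apply Rabs_lt_between' in HN.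
  intros y1 y2 Hy1 Hy12 Hy2.
  assert (Igc : I (psi g c)) by (apply psi_in_I, Ic).
  assert (Iy1 : I y1) by bounds. assert (Iy2 : I y2) by bounds.
  assert (HLy1 : L < y1) by (pose proof (psi_lt g L c IL Ic HLc); rewrite HgL in *; lra).
  assert (Hv1 : L < psi (gpow g N) y1)
    by (rewrite <- (psi_gpow_fixed g N L IL HgL); apply psi_lt; assumption).
  assert (Hv12 : psi (gpow g N) y1 < psi (gpow g N) y2) by (apply psi_lt; assumption).
  assert (Hv2 : psi (gpow g N) y2 <= psi (gpow g N) c) by (apply psi_le; auto).
  destruct (MVT_Derive E _ _ (C2_ex_derive E HE) Hv12) as [w [Hw HEw]].
  rewrite !HEk, !(commute_on_gpow k g N Hkg) in HEw by (try apply psi_in_I; assumption).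
  pose proof (HDE w ltac:(apply Rabs_lt_between'; lra)). nra.
Qed.

Lemma commuting_not_lt_on_fundamental_domain f x : commute_on f g -> psi f c = c ->
  psi g c < x < c -> ~ x < psi f x.
Proof.
  intros Hfg Hfc Hx Hfx.
  assert (Ix : I x) by (pose proof (psi_in_I g c Ic); bounds).
  destruct bounded_distortion as [Q [HQ Hdist]].
  set (K := psi f x - x).
  assert (Hxs : forall m, psi (gpow f m) x < c)
    by (intros m; rewrite <- (psi_gpow_fixed f m c Ic Hfc); apply psi_lt; auto; lra).
  destruct (bounded_sequence_small_step (fun m => psi (gpow f m) x) c (K / (4 * Q))) as [m Hm];
    [unfold K; apply Rdiv_lt_0_compat; lra | intros m; left; apply Hxs |].
  pose proof (psi_gpow_ge f m x Ix Hfx). pose proof (psi_gpow_step_gt f m x Ix Hfx).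
  pose proof (Hxs (S m)).
  assert (Hfxc : psi f x <= c) by (rewrite <- Hfc; apply psi_le; auto; lra).
  assert (Hfm : commute_on (gpow f m) g)
    by (apply commute_on_sym, commute_on_gpow, commute_on_sym, Hfg).
  destruct (commuting_expands_near_limit (gpow f m) Hfm (psi_gpow_fixed f m c Ic Hfc)) as [N HN].
  specialize (HN x (psi f x) ltac:(lra) Hfx Hfxc).
  rewrite <- psi_gpow_S' in HN by exact Ix.
  specialize (Hdist N x (psi f x) (psi (gpow f m) x) (psi (gpow f (S m)) x)
    ltac:(lra) Hfx Hfxc ltac:(lra) ltac:(lra) ltac:(lra)).
  fold K in Hdist.
  assert (Ifx : I (psi f x)) by (apply psi_in_I, Ix).
  pose proof (psi_lt (gpow g N) x (psi f x) Ix Ifx Hfx).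
  (* expansion by a factor 1/2 contradicts distortion by at most [Q] of a step shorter
     than [K / (4 Q)] *)
  assert (HQm : Q * (psi (gpow f (S m)) x - psi (gpow f m) x) < K / 4).
  { apply (Rmult_lt_compat_l Q) in Hm; [|exact HQ].
    replace (Q * (K / (4 * Q))) with (K / 4) in Hm by (field; lra). exact Hm. }
  assert (0 < K) by (unfold K; lra).
  nra.
Qed.

Lemma commuting_fixes_fundamental_domain f : commute_on f g -> psi f c = c ->
  forall x, psi g c <= x <= c -> psi f x = x.
Proof.
  intros Hfg Hfc x Hx.
  assert (Ix : I x) by (pose proof (psi_in_I g c Ic); bounds).
  destruct (Req_dec x c) as [-> | Hxc]; [exact Hfc|].
  destruct (Req_dec x (psi g c)) as [-> | Hxg]; [rewrite Hfg, Hfc; auto|].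
  destruct (Rtotal_order x (psi f x)) as [Hlt | [Heq | Hgt]]; [exfalso | auto | exfalso].
  - apply (commuting_not_lt_on_fundamental_domain f x); auto; lra.
  - apply (commuting_not_lt_on_fundamental_domain (inv f) x).
    + apply commute_on_inv, Hfg.
    + apply psi_inv_fixed; assumption.
    + lra.
    + pose proof (psi_lt (inv f) _ _ (psi_in_I f x Ix) Ix Hgt) as H.
      rewrite psi_inv_l in H by exact Ix. exact H.
Qed.

Lemma commuting_fixes_basin f : commute_on f g -> psi f c = c ->
  forall s, L < s <= c -> psi f s = s.
Proof.
  intros Hfg Hfc.
  assert (Hgc : psi g c < c) by (apply Hcontr; lra).
  assert (Horbit : forall n s, psi (gpow g n) c <= s <= c -> psi f s = s).
  { induction n as [|n IH]; intros s Hs.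
    - rewrite psi_gpow_0 in Hs by exact Ic. replace s with c by lra. exact Hfc.
    - destruct (Rle_lt_dec (psi g c) s) as [Hgs | Hsg].
      { apply commuting_fixes_fundamental_domain; auto; lra. }
      assert (Is : I s) by (pose proof (orbit_gt_fixed (S n)); bounds).
      set (s' := psi (inv g) s).
      assert (Is' : I s') by (apply psi_in_I, Is).
      assert (Hs' : psi g s' = s) by (apply psi_inv_r, Is).
      assert (Hs'n : psi (gpow g n) c <= s').
      { apply Rnot_lt_le. intros H. pose proof (psi_lt g _ _ Is' (psi_in_I _ _ Ic) H).
        rewrite Hs', <- psi_gpow_S in * by exact Ic. lra. }
      assert (Hs'c : s' <= c).
      { apply Rnot_lt_le. intros H. pose proof (psi_lt g _ _ Ic Is' H). lra. }
      rewrite <- Hs', Hfg, (IH s'); auto. }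
  intros s Hs. destruct (Hcv (s - L)) as [N HN]; [lra|]. specialize (HN N (le_n N)).
  unfold Rdist in HN. apply Rabs_lt_between' in HN. apply (Horbit N). lra.
Qed.

End Contraction.

Definition fixfree g a b := forall s, Rmin a b <= s <= Rmax a b -> psi g s <> s.

Lemma kopell_contracting f g c t : commute_on f g -> I c -> I t -> psi f c = c ->
  psi g c < c -> fixfree g c t -> psi f t = t.
Proof.
  intros Hfg Ic It Hfc Hgc Hfree.
  destruct (orbit_limit_fixed g c Ic Hgc) as [L [IL [HLc [HgL Hcv]]]].
  pose proof (psi_lt_above_orbit_limit g c L Ic Hgc IL Hcv) as Hcontr.
  assert (Hbasin : forall s, L < s <= c -> psi f s = s)
    by (eapply commuting_fixes_basin; eauto).
  destruct (Rle_lt_dec t c) as [Htc | Hct].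
  { apply Hbasin. split; [|exact Htc]. apply Rnot_le_lt. intros HtL.
    apply (Hfree L); [bounds | exact HgL]. }
  assert (Hgt : psi g t < t).
  { apply Rnot_le_lt. intros Hgt.
    destruct (psi_ivt_fixed g c t Ic It) as [r [Hr Hgr]]; [lra | nra |].
    apply (Hfree r); [bounds | exact Hgr]. }
  destruct (orbit_limit_fixed g t It Hgt) as [L' [IL' [HL't [HgL' Hcv']]]].
  assert (HL'c : L' < c).
  { apply Rnot_le_lt. intros H. apply (Hfree L'); [bounds | exact HgL']. }
  destruct (Hcv' (c - L')) as [N HN]; [lra|]. specialize (HN N (le_n N)).
  unfold Rdist in HN. apply Rabs_lt_between' in HN.
  assert (HLN : L < psi (gpow g N) t)
    by (rewrite <- (psi_gpow_fixed g N L IL HgL); apply psi_lt; auto; lra).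
  apply (psi_inj (gpow g N)); auto using psi_in_I.
  rewrite <- (commute_on_gpow f g N Hfg t It). apply Hbasin. lra.
Qed.

Lemma kopell f g c t : commute_on f g -> I c -> I t -> psi f c = c -> fixfree g c t -> psi f t = t.
Proof.
  intros Hfg Ic It Hfc Hfree.
  assert (Hgc : psi g c <> c) by (apply Hfree; bounds).
  destruct (Rtotal_order (psi g c) c) as [Hlt | [Heq | Hgt]]; [| contradiction |].
  - apply (kopell_contracting f g c t); assumption.
  - apply (kopell_contracting f (inv g) c t); auto.
    + apply commute_on_sym, commute_on_inv, commute_on_sym, Hfg.
    + apply psi_inv_lt; assumption.
    + intros s Hs Hinv. apply (Hfree s Hs).
      rewrite <- Hinv at 1. apply psi_inv_r. bounds.
Qed.

Lemma fixfree_preimage f D t : commute_on f D -> I t -> psi f t <> t ->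
  fixfree f t (psi (inv D) t).
Proof.
  intros HfD It Hft s Hs Hfs.
  set (r := psi (inv D) t) in *.
  assert (Ir : I r) by (apply psi_in_I, It).
  assert (HDr : psi D r = t) by (apply psi_inv_r, It).
  assert (Is : I s) by bounds.
  assert (Hd : exists d, Rmin s t <= d <= Rmax s t /\ psi D d = d).
  { apply NNPP. intros Hnone. apply Hft. apply (kopell f D s t); auto.
    intros d Hd HDd. apply Hnone. exists d. split; assumption. }
  destruct Hd as [d [Hd HDd]]. assert (Id : I d) by bounds.
  (* [D] is increasing and maps [r] to [t], so a fixed point between them forces [r = t] *)
  assert (Hdt : d = t).
  { destruct (Rle_dec t r) as [Htr | Hrt].
    - pose proof (psi_le D d r Id Ir ltac:(bounds)). bounds.
    - pose proof (psi_le D r d Ir Id ltac:(bounds)). bounds. }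
  subst d. assert (Hrt : r = t) by (apply (psi_inj D); congruence).
  apply Hft. replace t with s by bounds. exact Hfs.
Qed.

Lemma braid_off_fixed_not_lt f g h t : commute_on f g -> commute_on f h -> braid_on g h ->
  I t -> psi f t <> t -> ~ psi g t < psi h t.
Proof.
  intros Hfg Hfh Hgh It Hft Hlt.
  set (D := mul g (mul h g)).
  assert (HD : forall x, I x -> psi D x = psi g (psi h (psi g x)))
    by (intros x Hx; unfold D; rewrite !psi_mul; auto using psi_in_I).
  assert (HfD : commute_on f D) by (intros x Hx; rewrite !HD, Hfg, Hfh, Hfg; auto using psi_in_I).
  set (r := psi (inv D) t).
  assert (Ir : I r) by (apply psi_in_I, It).
  assert (HDr : psi D r = t) by (apply psi_inv_r, It).
  pose proof (fixfree_preimage f D t HfD It Hft) as Hfree. fold r in Hfree.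
  (* if [g s = h s] between [t] and [r], Kopell for [h^-1 g] and [f] would give [g t = h t] *)
  assert (Hne : forall s, Rmin t r <= s <= Rmax t r -> psi g s <> psi h s).
  { intros s Hs Hgs. assert (Is : I s) by bounds.
    set (phi := mul (inv h) g).
    assert (Hphi : forall x, I x -> psi phi x = psi (inv h) (psi g x))
      by (intros; apply psi_mul; auto).
    assert (Hphif : commute_on phi f).
    { intros x Hx. rewrite !Hphi, <- Hfg, (commute_on_inv h f (commute_on_sym f h Hfh));
        auto using psi_in_I. }
    assert (Hphit : psi phi t = t).
    { apply (kopell phi f s t Hphif Is It).
      - rewrite Hphi, Hgs, psi_inv_l; auto.
      - intros u Hu. apply Hfree. bounds. }
    rewrite Hphi in Hphit by exact It.
    apply (Rlt_not_eq _ _ Hlt). rewrite <- (psi_inv_r h (psi g t)), Hphit; auto using psi_in_I. }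
  assert (Hr : psi g r < psi h r).
  { destruct (Rtotal_order (psi g r) (psi h r)) as [H | [H | H]]; [exact H | exfalso..].
    - apply (Hne r); [bounds | exact H].
    - destruct (psi_cross g h t r It Ir Hlt H) as [z [Hz Hgz]]. apply (Hne z Hz Hgz). }
  (* the braid relation gives [D g = h D] and [D h = g D] on the interval *)
  pose proof (psi_lt D _ _ (psi_in_I g r Ir) (psi_in_I h r Ir) Hr) as HDlt.
  rewrite !HD, (Hgh (psi g r)), <- (Hgh r Ir), <- (HD r Ir), HDr in HDlt by auto using psi_in_I.
  lra.
Qed.

Lemma braid_agree_off_fixed f g h t : commute_on f g -> commute_on f h -> braid_on g h ->
  I t -> psi f t <> t -> psi g t = psi h t.
Proof.
  intros Hfg Hfh Hgh It Hft.
  destruct (Rtotal_order (psi g t) (psi h t)) as [H | [H | H]]; [exfalso | exact H | exfalso].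
  - apply (braid_off_fixed_not_lt f g h t); assumption.
  - apply (braid_off_fixed_not_lt f h g t); auto using braid_on_sym.
Qed.

Definition convex_in_I (J : R -> Prop) :=
  (forall s, J s -> I s) /\ (forall a b s, J a -> J b -> a <= s <= b -> J s).

Definition free_component y t s := I s /\ fixfree y t s.

Lemma free_component_convex y t : convex_in_I (free_component y t).
Proof.
  split; [intros s Hs; apply Hs|].
  intros a b s [Ia Ha] [Ib Hb] Hs. split; [bounds|].
  intros u Hu. destruct (Rle_dec t s), (Rle_dec a b);
    [apply Hb | apply Ha | apply Ha | apply Hb]; bounds.
Qed.

Lemma free_component_self y t : I t -> psi y t <> t -> free_component y t t.
Proof. intros It Hyt. split; [exact It|]. intros u Hu. replace u with t by bounds. exact Hyt. Qed.

Lemma free_component_nonfixed y t s : free_component y t s -> psi y s <> s.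
Proof. intros [Is Hs]. apply Hs. bounds. Qed.

Lemma free_component_invariant y t s : I t -> free_component y t s -> free_component y t (psi y s).
Proof.
  intros It [Is Hs]. pose proof (psi_in_I y s Is) as Iys.
  split; [exact Iys|]. intros u Hu Hyu.
  assert (Iu : I u) by bounds.
  apply (Hs u); [|exact Hyu].
  (* a fixed point of [y] is on the same side of [s] and of [y s] *)
  destruct (Rtotal_order u s) as [Hus | [-> | Hsu]]; [| bounds |].
  - pose proof (psi_lt y u s Iu Is Hus). bounds.
  - pose proof (psi_lt y s u Is Iu Hsu). bounds.
Qed.

Lemma kopell_free_component f y t s : commute_on f y -> I t -> psi f t = t ->
  free_component y t s -> psi f s = s.
Proof. intros Hfy It Hft [Is Hs]. apply (kopell f y t s); assumption. Qed.

Lemma braid_fixed u v s : braid_on u v -> I s -> psi v s = s -> psi v (psi u s) = psi u s ->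
  psi u s = s.
Proof.
  intros Huv Is Hvs Hvus. pose proof (Huv s Is) as Hs. rewrite Hvs, Hvus in Hs.
  apply (psi_inj u); auto using psi_in_I.
Qed.

Lemma braid_fixed_spread u v J s0 : braid_on u v -> convex_in_I J ->
  (forall s, J s -> psi v s = s) -> J s0 -> psi u s0 = s0 -> forall s, J s -> psi u s = s.
Proof.
  intros Huv [HJ HJconv] Hv Hs0 Hus0.
  assert (Hstay : forall s, J s -> J (psi u s) -> psi u s = s)
    by (intros s Hs Hus; apply (braid_fixed u v s Huv (HJ s Hs)); auto).
  assert (Hhit : forall s w, J s -> J w -> psi u w = s -> psi u s = s).
  { intros s w Hs Hw Huw. assert (Hww := Hstay w Hw ltac:(rewrite Huw; exact Hs)). congruence. }
  intros s Hs. pose proof (HJ s Hs) as Is. pose proof (HJ s0 Hs0) as Is0.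
  destruct (Rtotal_order (psi u s) s) as [Hlt | [Heq | Hgt]]; [| exact Heq |];
    destruct (Rle_lt_dec s0 s) as [Hs0s | Hss0].
  - pose proof (psi_le u s0 s Is0 Is Hs0s).
    apply Hstay; [exact Hs | apply (HJconv s0 s); auto; lra].
  - destruct (psi_ivt u (fun _ => s) s s0) as [w [Hw Huw]];
      [apply continuity_const; intros ? ?; reflexivity | auto | auto | lra | nra |].
    apply (Hhit s w Hs); [apply (HJconv s s0); auto | exact Huw].
  - destruct (psi_ivt u (fun _ => s) s0 s) as [w [Hw Huw]];
      [apply continuity_const; intros ? ?; reflexivity | auto | auto | lra | nra |].
    apply (Hhit s w Hs); [apply (HJconv s0 s); auto | exact Huw].
  - pose proof (psi_le u s s0 Is Is0 ltac:(lra)).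
    apply Hstay; [exact Hs | apply (HJconv s s0); auto; lra].
Qed.

Lemma braid_not_fixed_on_free_component y z t : braid_on y z -> I t -> psi y t <> t ->
  ~ (forall s, free_component y t s -> psi z s = s).
Proof.
  intros Hyz It Hyt Hz. apply Hyt, (braid_fixed y z t Hyz It).
  - apply Hz, free_component_self; assumption.
  - apply Hz, free_component_invariant, free_component_self; assumption.
Qed.

Section A4Chain.

Variables x1 x2 x3 x4 : G.
Hypotheses (H13 : commute_on x1 x3) (H14 : commute_on x1 x4) (H24 : commute_on x2 x4)
  (B12 : braid_on x1 x2) (B23 : braid_on x2 x3) (B34 : braid_on x3 x4).

Lemma A4_chain_fixed2 t : I t -> psi x4 t = t -> psi x2 t = t.
Proof.
  intros It H4t. apply NNPP. intros H2t.
  assert (Hx4 : forall s, free_component x2 t s -> psi x4 s = s)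
    by (intros s Hs; apply (kopell_free_component x4 x2 t s); auto using commute_on_sym).
  destruct (classic (forall s, free_component x2 t s -> psi x1 s = s)) as [Hx1 | Hx1].
  { apply (braid_not_fixed_on_free_component x2 x1 t); auto using braid_on_sym. }
  apply not_all_ex_not in Hx1. destruct Hx1 as [s0 Hs0].
  apply imply_to_and in Hs0. destruct Hs0 as [Hs0 H1s0].
  assert (H3s0 : psi x3 s0 = s0)
    by (rewrite (braid_agree_off_fixed x1 x3 x4 s0); auto; apply Hs0).
  apply (braid_not_fixed_on_free_component x2 x3 t B23 It H2t).
  apply (braid_fixed_spread x3 x4 (free_component x2 t) s0); auto using free_component_convex.
Qed.

Lemma A4_chain_fixed1 t : I t -> psi x4 t = t -> psi x2 t = t -> psi x1 t = t.
Proof.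
  intros It H4t H2t. apply NNPP. intros H1t.
  assert (Hx4 : forall s, free_component x1 t s -> psi x4 s = s)
    by (intros s Hs; apply (kopell_free_component x4 x1 t s); auto using commute_on_sym).
  assert (Hx3 : forall s, free_component x1 t s -> psi x3 s = s).
  { intros s Hs. rewrite (braid_agree_off_fixed x1 x3 x4 s); auto.
    - apply Hs.
    - apply (free_component_nonfixed x1 t s Hs). }
  apply (braid_not_fixed_on_free_component x1 x2 t B12 It H1t).
  apply (braid_fixed_spread x2 x3 (free_component x1 t) t);
    auto using free_component_convex, free_component_self.
Qed.

Lemma A4_chain_eq t : I t -> psi x1 t = psi x2 t.
Proof.
  intros It. destruct (Req_dec (psi x4 t) t) as [H4t | H4t].
  - rewrite A4_chain_fixed1, A4_chain_fixed2; auto using A4_chain_fixed2.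
  - apply (braid_agree_off_fixed x4 x1 x2 t); auto using commute_on_sym.
Qed.

End A4Chain.

Lemma commute_braid_eq x y : commute_on x y -> braid_on x y -> forall t, I t -> psi x t = psi y t.
Proof.
  intros Hxy Bxy t It.
  pose proof (Bxy t It) as Hb.
  rewrite (Hxy t It), (Hxy (psi x t)) in Hb by (apply psi_in_I, It).
  apply (psi_inj y) in Hb; auto using psi_in_I.
  rewrite <- (Hxy t It) in Hb. apply (psi_inj x) in Hb; auto using psi_in_I.
Qed.

Lemma commute_on_in_gen (S : G -> Prop) h : (forall s, S s -> commute_on s h) ->
  forall g, in_gen mul inv e S g -> commute_on g h.
Proof.
  intros HS g Hg. induction Hg as [s Hs | | x y _ IHx _ IHy | x _ IHx]; intros t It.
  - apply HS; assumption.
  - rewrite !psi_e; auto using psi_in_I.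
  - rewrite !psi_mul, IHy, IHx; auto using psi_in_I.
  - apply (commute_on_inv x h IHx t It).
Qed.

Lemma commute_on_of_generators_alike (S : G -> Prop) z : (forall g, in_gen mul inv e S g) ->
  (forall s, S s -> forall t, I t -> psi s t = psi z t) -> forall g h, commute_on g h.
Proof.
  intros Hgen Hz g h.
  apply (commute_on_in_gen S h); [|apply Hgen]. intros s Hs.
  apply commute_on_sym, (commute_on_in_gen S s); [|apply Hgen]. intros s' Hs' t It.
  assert (Izt : I (psi z t)) by (apply psi_in_I, It).
  rewrite (Hz s Hs t It), (Hz s' Hs' t It), (Hz s Hs _ Izt), (Hz s' Hs' _ Izt). reflexivity.
Qed.

Section MCRelations.

Variables (n : nat) (a b c : nat -> G).
Hypotheses (Hn : (2 <= n)%nat)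
  (Hbb : forall i j, (1 <= i <= n)%nat -> (1 <= j <= n)%nat -> mul (b i) (b j) = mul (b j) (b i))
  (Hac : forall i j, (1 <= i <= n)%nat -> (1 <= j <= n - 1)%nat ->
     mul (a i) (c j) = mul (c j) (a i))
  (Hab : forall i j, (1 <= i <= n)%nat -> (1 <= j <= n)%nat -> i <> j ->
     mul (a i) (b j) = mul (b j) (a i))
  (Bab : forall i, (1 <= i <= n)%nat -> mul (a i) (mul (b i) (a i)) = mul (b i) (mul (a i) (b i)))
  (Bbc : forall i j, (1 <= i <= n)%nat -> (1 <= j <= n - 1)%nat -> (j = i \/ j = (i - 1)%nat) ->
     mul (b i) (mul (c j) (b i)) = mul (c j) (mul (b i) (c j))).

Lemma MC_psi_a_eq_b i : (1 <= i <= n)%nat -> forall t, I t -> psi (a i) t = psi (b i) t.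
Proof.
  intros Hi. destruct (Nat.eq_dec i 1) as [-> | Hi1].
  - apply (A4_chain_eq (a 1%nat) (b 1%nat) (c 1%nat) (b 2%nat)).
    + apply commute_on_of_mul, Hac; lia.
    + apply commute_on_of_mul, Hab; lia.
    + apply commute_on_of_mul, Hbb; lia.
    + apply braid_on_of_mul, Bab; lia.
    + apply braid_on_of_mul, Bbc; lia.
    + apply braid_on_sym, braid_on_of_mul, Bbc; lia.
  - apply (A4_chain_eq (a i) (b i) (c (i - 1)%nat) (b (i - 1)%nat)).
    + apply commute_on_of_mul, Hac; lia.
    + apply commute_on_of_mul, Hab; lia.
    + apply commute_on_of_mul, Hbb; lia.
    + apply braid_on_of_mul, Bab; lia.
    + apply braid_on_of_mul, Bbc; lia.
    + apply braid_on_sym, braid_on_of_mul, Bbc; lia.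
Qed.

Lemma MC_psi_c_eq_b j : (1 <= j <= n - 1)%nat -> forall t, I t ->
  psi (c j) t = psi (b j) t /\ psi (c j) t = psi (b (S j)) t.
Proof.
  intros Hj t It. split; apply commute_braid_eq; auto.
  - apply (commute_on_congr (c j) (a j)); [apply MC_psi_a_eq_b; lia|].
    apply commute_on_sym, commute_on_of_mul, Hac; lia.
  - apply braid_on_sym, braid_on_of_mul, Bbc; lia.
  - apply (commute_on_congr (c j) (a (S j))); [apply MC_psi_a_eq_b; lia|].
    apply commute_on_sym, commute_on_of_mul, Hac; lia.
  - apply braid_on_sym, braid_on_of_mul, Bbc; lia.
Qed.

Lemma MC_psi_b_eq_b1 i : (1 <= i <= n)%nat -> forall t, I t -> psi (b i) t = psi (b 1%nat) t.
Proof.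
  intros Hi t It. induction i as [|i IH]; [lia|].
  destruct (Nat.eq_dec i 0) as [-> | Hi0]; [reflexivity|].
  destruct (MC_psi_c_eq_b i ltac:(lia) t It) as [Hci HcSi].
  rewrite <- HcSi, Hci. apply IH. lia.
Qed.

End MCRelations.

Lemma MC_commute_on n : (2 <= n)%nat -> MC mul inv e n -> forall g h, commute_on g h.
Proof.
  intros Hn [_ [a [b [c [Hgen [H1 [_ [Hac [Hab [_ [Bab Bbc]]]]]]]]]]].
  assert (Hbb : forall i j, (1 <= i <= n)%nat -> (1 <= j <= n)%nat ->
    mul (b i) (b j) = mul (b j) (b i)) by (intros i j Hi Hj; apply (H1 i j Hi Hj)).
  apply (commute_on_of_generators_alike _ (b 1%nat) Hgen).
  intros s [[i [Hi [-> | ->]]] | [j [Hj ->]]] t It.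
  - rewrite (MC_psi_a_eq_b n a b c) by first [assumption | lia].
    apply (MC_psi_b_eq_b1 n a b c); first [assumption | lia].
  - apply (MC_psi_b_eq_b1 n a b c); first [assumption | lia].
  - rewrite (proj1 (MC_psi_c_eq_b n a b c Hn Hbb Hac Hab Bab Bbc j Hj t It)).
    apply (MC_psi_b_eq_b1 n a b c); first [assumption | lia].
Qed.

End Action.

Theorem theorem3p11 (n : nat) (Hn : (2 <= n)%nat)
  (G : Type) (mul : G -> G -> G) (inv : G -> G) (e : G)
  (HG : is_group mul inv e) (HMC : MC mul inv e n)
  (p q : R) (Hpq : p < q) (psi : G -> R -> R)
  (Hpsi : hom_to_Diff2 mul p q psi) :
  forall g h x, in_I p q x -> psi g (psi h x) = psi h (psi g x).
Proof.
  exact (MC_commute_on G mul inv e HG p q psi Hpq Hpsi n Hn HMC).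
Qed.
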